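(* Let $f_\bullet\colon X\hookrightarrow Z$ be an injective map of sets between finite metric spaces (not necessarily non-expansive), $V=\mathrm{PH}_0(X)$, $U=\mathrm{PH}_0(Z)$, and $f_0\colon V_0\to U_0$ the induced linear map. Then $\mathcal{M}^0_f$ induces an injection $\sigma^f\colon\mathrm{Rep}\,\mathcal{B}(V)\hookrightarrow\mathrm{Rep}\,\mathcal{B}(U)$; that is, $\sum_b\mathcal{M}^0_f(a,b)=m^V(a)$ for every $a\in S^V$ and $\sum_a \mathcal{M}^0_f(a,b)\le m^U(b)$ for every $b\in S^U$, so that there is an injection matching exactly $\mathcal{M}^0_f(a,b)$ copies of $[0,a)$ to copies of $[0,b)$ for all $a,b$.
   Context: All vector spaces are over $\mathbb{Z}_2$. For a finite metric space $X$, $\mathrm{VR}_r(X)$ is the graph on $X$ with edges $[x,y]$ for $d^X(x,y)\le r$, and $\mathrm{PH}_0(X)$ is the persistence module $r\mapsto H_0(\mathrm{VR}_r(X))$ (free on connected components) with structure maps $\rho_{rs}$ induced by inclusion; $V_0$ has basis $X$ and $f_0$ sends $x$ to $f_\bullet(x)$. The barcode $\mathcal{B}(V)=(S^V,m^V)$ is the multiset of finite death values $b$ of bars $[0,b)$ (infinite bar excluded). $\mathrm{Rep}(S,m)=\{(s,\ell):s\in S, 1\le\ell\le m(s)\}$. With $\ker^+_b(U)=\ker(\rho^U_{0b})$ and $\ker^-_b(U)=\bigcup_{0\le r<b}\ker(\rho^U_{0r})$, $\mathcal{M}^0_f(a,b)=\dim\frac{f_0(\ker^+_a V)\cap \ker^+_b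 U}{f_0(\ker^-_a V)\cap\ker^+_b U+f_0(\ker^+_a V)\cap \ker^-_b U}$ for $a,b>0$. *)

From HB Require Import structures.
From mathcomp Require Import all_boot all_order all_algebra.
From mathcomp Require Import boolp classical_sets fsbigop reals.
Set Implicit Arguments. Unset Strict Implicit. Unset Printing Implicit Defensive.
Import Order.TTheory GRing.Theory Num.Theory.
Local Open Scope ring_scope.

(* A finite metric space on the point set 'I_n (every finite set is in
   bijection with some 'I_n), with real-valued metric d. *)
Definition is_metric (R : realType) (n : nat) (d : 'I_n -> 'I_n -> R) : Prop :=
  [/\ forall x y, 0 <= d x y,
      forall x y, (d x y = 0) <-> (x = y),
      forall x y, d x y = d y x &
      forall x y z, d x z <= d x y + d y z].

Definition vr_edge (R : realType) n (d : 'I_n -> 'I_n -> R) (r : R) : rel 'I_n :=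
  fun x y => d x y <= r.

Definition vr_conn (R : realType) n (d : 'I_n -> 'I_n -> R) (r : R) : rel 'I_n :=
  connect (vr_edge d r).

(* Structure map rho_{0r} : H_0(VR_0) = Z_2^n -> H_0(VR_r), acting on row
   vectors.  The basis vector of x is sent to (the indicator of) the connected
   component of x in VR_r; this identifies the free Z_2-space on components
   with the functions on points that are constant on components (an injective
   encoding, so kernels are those of the genuine structure map). *)
Definition rho0 (R : realType) n (d : 'I_n -> 'I_n -> R) (r : R) : 'M['F_2]_n :=
  \matrix_(i, j) (vr_conn d r i j)%:R.

Definition kerP (R : realType) n (d : 'I_n -> 'I_n -> R) (b : R) : 'M['F_2]_n :=
  kermx (rho0 d b).

(* ker^-_b = union over 0 <= r < b of ker rho_{0r}.  The union of this nested
   family is a subspace; we represent it by the row space spanned by all vectors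
   in the union (which is the union itself). *)
Definition kerM (R : realType) n (d : 'I_n -> 'I_n -> R) (b : R) : 'M['F_2]_n :=
  (\sum_(v : 'rV['F_2]_n |
        `[< exists r : R, (0 <= r < b)%R /\ (v <= kermx (rho0 d r))%MS >]) <<v>>)%MS.

Definition f0 n m (f : 'I_n -> 'I_m) : 'M['F_2]_(n, m) :=
  \matrix_(i, j) (f i == j)%:R.

(* M^0_f(a,b) = dim of
   (f0(ker^+_a V) cap ker^+_b U) / (f0(ker^-_a V) cap ker^+_b U + f0(ker^+_a V) cap ker^-_b U)
   (the denominator is a subspace of the numerator). *)
Definition Mf (R : realType) n m (dX : 'I_n -> 'I_n -> R) (dZ : 'I_m -> 'I_m -> R)
    (f : 'I_n -> 'I_m) (a b : R) : nat :=
  (\rank (kerP dX a *m f0 f :&: kerP dZ b)%MS -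
   \rank ((kerM dX a *m f0 f :&: kerP dZ b) + (kerP dX a *m f0 f :&: kerM dZ b))%MS)%N.

(* multiplicity m(b) of the bar [0,b) in the barcode of PH_0: all bars of PH_0
   are born at 0, so the number of bars dying exactly at b > 0 is
   dim ker^+_b - dim ker^-_b (the number of components merged at scale b). *)
Definition mult (R : realType) n (d : 'I_n -> 'I_n -> R) (b : R) : nat :=
  (\rank (kerP d b) - \rank (kerM d b))%N.

Definition bar_support (R : realType) n (d : 'I_n -> 'I_n -> R) : set R :=
  [set b | 0 < b /\ (0 < mult d b)%N].

Definition Rep (R : realType) n (d : 'I_n -> 'I_n -> R) : set (R * nat) :=
  [set p | p.1 \in bar_support d /\ (1 <= p.2 <= mult d p.1)%N].

From HB Require Import structures.
From mathcomp Require Import all_boot all_order all_algebra.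
From mathcomp Require Import boolp classical_sets fsbigop reals.
From mathcomp Require Import zify.
Import Order.TTheory GRing.Theory Num.Theory.
Set Implicit Arguments. Unset Strict Implicit. Unset Printing Implicit Defensive.
Local Open Scope ring_scope.

(* The kernels ker^+_b and ker^-_b of PH_0 only change at the finitely
   many distances of the space, and ker^-_b = ker^+_b' for the largest
   distance b' < b; hence, for every monotone h, the jumps
   h (ker^+_b) - h (ker^-_b) over all b > 0 telescope to
   h (ker^+_diam) - h 0.  By the modular law, M^0_f(a, b) is such a jump in b
   for h = rank (f_0(ker^+_a) :&: _ + f_0(ker^-_a)), and also a jump in a for
   h = rank (f_0(_) :&: ker^+_b + ker^-_b).  As f_0 is injective, the sum over
   b is rank ker^+_a - rank ker^-_a = m^V(a), while the sum over a is at most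
   rank ker^+_b - rank ker^-_b = m^U(b).  A nonnegative integer matrix with
   these row sums and column bounds yields the injection: the copies of
   [0, a) are sent, in order, to M(a, b) copies of each [0, b), numbered after
   the copies of [0, b) already used by the previous values of a. *)

Lemma rank_cap_quotientEl (F : fieldType) k p1 p2 p3 p4 (A : 'M[F]_(p1, k))
    (A' : 'M[F]_(p2, k)) (B : 'M[F]_(p3, k)) (B' : 'M[F]_(p4, k)) :
  (A' <= A)%MS -> (B' <= B)%MS ->
  (\rank (A :&: B) - \rank (A' :&: B + A :&: B'))%N =
  (\rank (A :&: B + A') - \rank (A :&: B' + A'))%N.
Proof.
move=> sA'A sB'B; set X := (A :&: B)%MS.
have sAB'X : (A :&: B' <= X)%MS.
  by rewrite sub_capmx capmxSl (submx_trans (capmxSr _ _)).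
have sum_eq : (X + (A :&: B' + A') :=: X + A')%MS.
  apply/eqmxP/andP; split; last by rewrite addsmxS ?addsmxSr.
  by rewrite !addsmx_sub addsmxSl addsmxSr (submx_trans sAB'X) ?addsmxSl.
have cap_eq : (X :&: (A :&: B' + A') :=: A' :&: B + A :&: B')%MS.
  rewrite addsmxC; apply: eqmx_trans (eqmx_sym (matrix_modr _ sAB'X)) _.
  apply: adds_eqmx => //; apply/eqmxP.
  rewrite !sub_capmx capmxSr capmxSl (submx_trans (capmxSl _ _) sA'A).
  by rewrite (submx_trans (capmxSl _ _) (capmxSr _ _)) capmxSr.
have := mxrank_sum_cap X (A :&: B' + A')%MS.
rewrite sum_eq cap_eq; lia.
Qed.

Lemma rank_cap_quotientEr (F : fieldType) k p1 p2 p3 p4 (A : 'M[F]_(p1, k))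
    (A' : 'M[F]_(p2, k)) (B : 'M[F]_(p3, k)) (B' : 'M[F]_(p4, k)) :
  (A' <= A)%MS -> (B' <= B)%MS ->
  (\rank (A :&: B) - \rank (A' :&: B + A :&: B'))%N =
  (\rank (A :&: B + B') - \rank (A' :&: B + B'))%N.
Proof.
move=> sA'A sB'B; rewrite addsmxC [(A :&: B)%MS]capmxC [(A' :&: B)%MS]capmxC.
by rewrite [(A :&: B')%MS]capmxC rank_cap_quotientEl.
Qed.

Section TakePrefix.
Local Open Scope nat_scope.
Variable T : Type.
Implicit Types (s : seq T) (P : pred T).

Lemma count_take_nth x0 s P i : i < size s ->
  count P (take i.+1 s) = count P (take i s) + P (nth x0 s i).
Proof. by move=> lt_i_s; rewrite (take_nth x0 lt_i_s) -cats1 count_cat /= addn0. Qed.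

Lemma leq_count_take s P i j : i <= j -> count P (take i s) <= count P (take j s).
Proof.
move=> le_ij; rewrite -(take_takel s le_ij) -[X in _ <= count _ X](cat_take_drop i).
by rewrite count_cat leq_addr.
Qed.

Lemma leq_sum_take s (F : T -> nat) i j : i <= j ->
  \sum_(x <- take i s) F x <= \sum_(x <- take j s) F x.
Proof.
move=> le_ij; rewrite -(take_takel s le_ij) -[X in _ <= \sum_(x <- X) _](cat_take_drop i).
by rewrite big_cat leq_addr.
Qed.

End TakePrefix.

Section TakeCountMem.
Local Open Scope nat_scope.
Variables (T : eqType) (x0 : T) (s : seq T).

Lemma count_take_nth_lt i : i < size s ->
  count_mem (nth x0 s i) (take i s) < count_mem (nth x0 s i) s.
Proof.
move=> lt_i_s; rewrite -[X in _ < count _ X](take_size s).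
apply: leq_trans (leq_count_take _ _ lt_i_s).
by rewrite (count_take_nth x0) //= eqxx addn1.
Qed.

Lemma nth_count_take_inj i j : i < size s -> j < size s ->
  nth x0 s i = nth x0 s j ->
  count_mem (nth x0 s i) (take i s) = count_mem (nth x0 s j) (take j s) -> i = j.
Proof.
wlog le_ij : i j / i <= j => [hw|].
  by case: (leqP i j) => [|/ltnW] le; [exact: hw | move=> *; apply/esym/hw].
move=> lt_i_s lt_j_s eq_nth; rewrite -eq_nth; case: ltngtP le_ij => // lt_ij _ eq_cnt.
have := leq_count_take s (pred1 (nth x0 s i)) lt_ij.
by rewrite (count_take_nth x0) //= eqxx eq_cnt addn1 ltnn.
Qed.

End TakeCountMem.

Definition is_copy (T : eqType) (S : seq T) (mult : T -> nat) (p : T * nat) :=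
  (p.1 \in S) && (0 < p.2 <= mult p.1)%N.

Section CopyMatching.
Local Open Scope nat_scope.
Variables (A B : eqType) (b0 : B) (SA : seq A) (SB : seq B).
Variables (M : A -> B -> nat) (mA : A -> nat) (mB : B -> nat).

Definition targets a := flatten [seq nseq (M a b) b | b <- SB].
Definition offset a b := \sum_(a' <- take (index a SA) SA) M a' b.
Definition match_copy (p : A * nat) : B * nat :=
  let b := nth b0 (targets p.1) p.2.-1 in
  (b, (offset p.1 b + count_mem b (take p.2.-1 (targets p.1))).+1).

Lemma offset_addE a b : a \in SA ->
  offset a b + M a b = \sum_(a' <- take (index a SA).+1 SA) M a' b.
Proof.
move=> a_in; rewrite (take_nth a) ?index_mem //.
by rewrite -cats1 big_cat /= big_seq1 nth_index.
Qed.

Lemma offset_inj a a' b k k' : a \in SA -> a' \in SA -> k < M a b -> k' < M a' b ->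
  offset a b + k = offset a' b + k' -> a = a'.
Proof.
move=> a_in a'_in lt_k lt_k' eq_off.
wlog le_aa' : a a' k k' a_in a'_in lt_k lt_k' eq_off / index a SA <= index a' SA => [hw|].
  case: (leqP (index a SA) (index a' SA)) => [|/ltnW] le; first exact: (hw a a' k k').
  by apply/esym/(hw a' a k' k).
apply: (index_inj a a_in a'_in).
case: ltngtP le_aa' => // lt_aa' _.
have := leq_sum_take SA (M^~ b) lt_aa'; rewrite -offset_addE // -/(offset a' b); lia.
Qed.

Hypothesis SB_uniq : uniq SB.

Lemma count_targets a c : count_mem c (targets a) = if c \in SB then M a c else 0.
Proof.
rewrite count_flatten -map_comp sumnE big_map.
under eq_bigr do rewrite /= count_nseq /=.
case: ifPn => [c_in|c_notin].
  rewrite (bigD1_seq c) //= eqxx mul1n big1 ?addn0 // => b /negbTE.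
  by rewrite eq_sym => ->.
by rewrite big1_seq // => b /andP[_]; case: eqP => // ->; rewrite (negbTE c_notin).
Qed.

Lemma mem_targets a c : c \in targets a -> c \in SB.
Proof. by rewrite -has_pred1 has_count count_targets; case: ifP. Qed.

Hypothesis row_sum : forall a, a \in SA -> \sum_(b <- SB) M a b = mA a.

Lemma size_targets a : a \in SA -> size (targets a) = mA a.
Proof.
move=> a_in; rewrite -row_sum // size_flatten /shape -map_comp sumnE big_map.
by apply: eq_bigr => b _ /=; rewrite size_nseq.
Qed.

Lemma targets_nth_count_lt a l : a \in SA -> 0 < l <= mA a ->
  let c := nth b0 (targets a) l.-1 in
  c \in SB /\ count_mem c (take l.-1 (targets a)) < M a c.
Proof.
move=> a_in l_range c; have lt_l : l.-1 < size (targets a) by rewrite size_targets //; lia.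
have c_in : c \in SB := mem_targets (mem_nth b0 lt_l).
by split=> //; have := count_take_nth_lt b0 lt_l; rewrite count_targets c_in.
Qed.

Lemma match_copy_inj p q : is_copy SA mA p -> is_copy SA mA q ->
  match_copy p = match_copy q -> p = q.
Proof.
case: p q => [a l] [a' l'] /andP[/= a_in l_range] /andP[/= a'_in l'_range].
have [_ lt_cnt] := targets_nth_count_lt a_in l_range.
have [_ lt_cnt'] := targets_nth_count_lt a'_in l'_range.
case=> eq_nth eq_off; rewrite -eq_nth in lt_cnt' eq_off.
have eq_a := offset_inj a_in a'_in lt_cnt lt_cnt' eq_off; subst a'.
move/addnI: eq_off => eq_cnt.
have lt_l : l.-1 < size (targets a) by rewrite size_targets //; lia.
have lt_l' : l'.-1 < size (targets a) by rewrite size_targets //; lia.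
have := nth_count_take_inj lt_l lt_l' eq_nth; rewrite -eq_nth => /(_ eq_cnt).
by move: l_range l'_range => /andP[l_gt0 _] /andP[l'_gt0 _] eq_l; congr (_, _); lia.
Qed.

Lemma count_match_copy a c : a \in SA ->
  count (fun l => (match_copy (a, l)).1 == c) (iota 1 (mA a)) = if c \in SB then M a c else 0.
Proof.
move=> a_in; rewrite -count_targets -size_targets // -[1]/(1 + 0) iotaDl count_map.
by rewrite -[in RHS](mkseq_nth b0 (targets a)) /mkseq count_map.
Qed.

Hypothesis col_sum : forall b, b \in SB -> \sum_(a <- SA) M a b <= mB b.

Lemma match_copy_range p : is_copy SA mA p -> is_copy SB mB (match_copy p).
Proof.
case: p => a l /andP[/= a_in l_range]; have [c_in lt_cnt] := targets_nth_count_lt a_in l_range.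
rewrite /is_copy /= c_in /=; set c := nth _ _ _ in c_in lt_cnt *.
have lt_idx : index a SA < size SA by rewrite index_mem.
have := leq_sum_take SA (M^~ c) lt_idx; rewrite take_size -offset_addE //.
by have := col_sum c_in; lia.
Qed.

End CopyMatching.

Lemma bigmax_id_mem disp (T : orderType disp) (x0 : T) (s : seq T) (P : pred T) :
  \big[Order.max/x0]_(x <- s | P x) x \in x0 :: s.
Proof.
rewrite big_seq_cond; apply: (big_ind (fun y => y \in x0 :: s)).
- exact: mem_head.
- by move=> x y x_in y_in; case: leP.
- by move=> x /andP[x_in _]; rewrite in_cons x_in orbT.
Qed.

Lemma telescope_pred_sum (R : numDomainType) (phi : R -> nat) (pred_of : R -> R)
    (s : seq R) (t : R) :
  {homo phi : x y / x <= y >-> (x <= y)%N} ->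
  uniq s -> {in s, forall b, 0 < b} ->
  {in s, forall b, [/\ pred_of b \in 0 :: s, pred_of b < b &
                      {in s, forall x, x < b -> x <= pred_of b}]} ->
  t \in 0 :: s -> {in s, forall x, x <= t} ->
  (\sum_(b <- s) (phi b - phi (pred_of b)))%N = (phi t - phi 0%R)%N.
Proof.
move=> phi_mono; have [k] := ubnP (size s); elim: k s t => // k IH s t.
move=> size_s uniq_s pos_s pred_s t_in t_max.
have [/size0nil s0|s_gt0] := posnP (size s).
  by move: t_in; rewrite s0 big_nil inE => /eqP ->; rewrite subnn.
have {}t_in : t \in s.
  move: t_in; rewrite in_cons => /predU1P[t0|//]; have x_in := mem_nth 0 s_gt0.
  by have := lt_le_trans (pos_s _ x_in) (t_max _ x_in); rewrite t0 ltxx.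
have [pt_in pt_lt pt_max] := pred_s t t_in.
have mem_rem x : (x \in rem t s) = (x != t) && (x \in s) by rewrite mem_rem_uniq.
have pred_ne_t x : x \in s -> pred_of x != t.
  move=> x_in; apply: contraTneq (t_max x x_in) => <-.
  by have [_ lt_px _] := pred_s x x_in; rewrite lt_geF.
rewrite (perm_big _ (perm_to_rem t_in)) big_cons (IH _ (pred_of t)).
- have pt_ge0 : 0 <= pred_of t.
    by move: pt_in; rewrite in_cons => /predU1P[->//|/pos_s/ltW].
  have : (phi 0%R <= phi (pred_of t))%N := phi_mono _ _ pt_ge0.
  have := phi_mono _ _ (ltW pt_lt); rewrite /=; lia.
- by rewrite size_rem //; move: size_s; rewrite -(prednK s_gt0).
- exact: rem_uniq.
- by move=> x; rewrite mem_rem => /andP[_ /pos_s].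
- move=> x; rewrite mem_rem => /andP[_ x_in]; have [px_in px_lt px_max] := pred_s x x_in.
  split=> //; last by move=> y; rewrite mem_rem => /andP[_ /px_max].
  by move: px_in; rewrite !in_cons mem_rem pred_ne_t.
- by move: pt_in; rewrite !in_cons mem_rem pred_ne_t.
- move=> x; rewrite mem_rem => /andP[x_ne x_in].
  by apply: pt_max; rewrite // lt_neqAle x_ne t_max.
Qed.

Definition conn_mx n (e : rel 'I_n) : 'M['F_2]_n := \matrix_(i, j) (connect e i j)%:R.

Lemma kermx_conn_mxS n (e e' : rel 'I_n) : connect_sym e -> subrel e e' ->
  (kermx (conn_mx e) <= kermx (conn_mx e'))%MS.
Proof.
move=> sym_e sub_ee'.
have sub_conn : subrel (connect e) (connect e').
  by apply: connect_sub => x y /sub_ee' /connect1.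
pose E : 'M['F_2]_n := \matrix_(k, j) ((k == fingraph.root e k) && connect e' k j)%:R.
have -> : conn_mx e' = conn_mx e *m E.
  apply/matrixP => i j; rewrite !mxE (bigD1 (fingraph.root e i)) //= big1 ?addr0 => [|k k_ne].
    rewrite !mxE root_root // eqxx connect_root mul1r /=.
    congr (nat_of_bool _)%:R; apply/idP/idP; apply: connect_trans; apply: sub_conn.
      by rewrite sym_e connect_root.
    exact: connect_root.
  rewrite !mxE; have [conn_ik|] := boolP (connect e i k); last by rewrite mul0r.
  suff -> : (k == fingraph.root e k) = false by rewrite mulr0.
  by apply: contraNF k_ne => /eqP {1}->; rewrite (root_connect sym_e) sym_e.
by apply/sub_kermxP; rewrite mulmxA mulmx_ker mul0mx.
Qed.

Section VietorisRipsKernels.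
Variables (R : realType) (n : nat) (d : 'I_n -> 'I_n -> R).
Hypothesis d_sym : forall x y, d x y = d y x.

Lemma vr_connect_sym r : connect_sym (vr_edge d r).
Proof. by apply: sym_connect_sym => x y; rewrite /vr_edge d_sym. Qed.

Lemma kerPS r s : subrel (vr_edge d r) (vr_edge d s) -> (kerP d r <= kerP d s)%MS.
Proof. exact/kermx_conn_mxS/vr_connect_sym. Qed.

Lemma kerP_le r s : r <= s -> (kerP d r <= kerP d s)%MS.
Proof. by move=> le_rs; apply: kerPS => x y /le_trans; apply. Qed.

Definition dists : seq R := [seq d p.1 p.2 | p : 'I_n * 'I_n].
Definition prev_dist (b : R) : R := \big[Num.max/0]_(x <- dists | x < b) x.
Definition diam : R := \big[Num.max/0]_(x <- dists) x.
Definition pos_dists : seq R := undup [seq x <- dists | 0 < x].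

Lemma mem_dists x y : d x y \in dists.
Proof. exact: (map_f _ (mem_enum _ (x, y))). Qed.

Lemma mem_pos_dists b : (b \in pos_dists) = (b \in dists) && (0 < b).
Proof. by rewrite mem_undup mem_filter andbC. Qed.

Lemma pos_dists_uniq : uniq pos_dists.
Proof. exact: undup_uniq. Qed.

Lemma pos_dists_gt0 b : b \in pos_dists -> 0 < b.
Proof. by rewrite mem_pos_dists => /andP[]. Qed.

Lemma prev_dist_ge0 b : 0 <= prev_dist b.
Proof. exact: bigmax_ge_id. Qed.

Lemma prev_dist_lt b : 0 < b -> prev_dist b < b.
Proof. by move=> b_gt0; apply: bigmax_lt. Qed.

Lemma le_prev_dist b x : x \in dists -> x < b -> x <= prev_dist b.
Proof. exact: le_bigmax_seq. Qed.

Lemma prev_dist_mem b : prev_dist b \in 0 :: pos_dists.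
Proof.
have := bigmax_id_mem 0 dists (< b); rewrite -/(prev_dist b) !in_cons mem_pos_dists.
by case: eqVneq => //= p_ne0 ->; rewrite lt_def p_ne0 prev_dist_ge0.
Qed.

Lemma le_diam x : x \in dists -> x <= diam.
Proof. by move=> x_in; apply: le_bigmax_seq. Qed.

Lemma diam_mem : diam \in 0 :: pos_dists.
Proof.
have := bigmax_id_mem 0 dists xpredT; rewrite -/diam !in_cons mem_pos_dists.
by case: eqVneq => //= p_ne0 ->; rewrite lt_def p_ne0 bigmax_ge_id.
Qed.

Lemma kerM_eqmx b : 0 < b -> (kerM d b :=: kerP d (prev_dist b))%MS.
Proof.
move=> b_gt0; apply/eqmxP/andP; split.
  apply/sumsmx_subP => v /asboolP[r [/andP[_ lt_rb] v_sub]].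
  rewrite genmxE (submx_trans v_sub) // kerPS // => x y le_dr.
  exact: le_prev_dist (mem_dists x y) (le_lt_trans le_dr lt_rb).
apply/row_subP => i; apply: (sumsmx_sup (row i (kerP d (prev_dist b)))); last first.
  by rewrite genmxE.
apply/asboolP; exists (prev_dist b).
by rewrite prev_dist_ge0 prev_dist_lt //; split=> //; apply: row_sub.
Qed.

Lemma kerM_sub_kerP b : 0 < b -> (kerM d b <= kerP d b)%MS.
Proof. by move=> b_gt0; rewrite kerM_eqmx // kerP_le // ltW ?prev_dist_lt. Qed.

Lemma kerP_sub_prev_dist b : b \notin dists -> (kerP d b <= kerP d (prev_dist b))%MS.
Proof.
move=> b_notin; apply: kerPS => x y le_db; apply: le_prev_dist (mem_dists x y) _.
by rewrite lt_neqAle [_ <= b]le_db andbT; apply: contraNneq b_notin => <-; apply: mem_dists.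
Qed.

Lemma kerP_diam : kerP d diam = kermx (const_mx 1 : 'M['F_2]_n).
Proof.
by congr kermx; apply/matrixP => i j; rewrite !mxE /vr_conn connect1 // /vr_edge le_diam ?mem_dists.
Qed.

Hypothesis d_sep : forall x y, d x y <= 0 -> x = y.

Lemma kerP0 : kerP d 0 = 0.
Proof.
rewrite /kerP; have -> : rho0 d 0 = 1%:M.
  apply/matrixP => i j; rewrite !mxE; congr (nat_of_bool _)%:R.
  apply/idP/eqP => [|<-]; last exact: connect0.
  move=> /connectP[p]; elim: p i => [|z p IH] i /=; first by move=> _ ->.
  by case/andP => /d_sep -> /IH.
by apply/eqP; rewrite kermx_eq0 row_free_unit unitmx1.
Qed.

Lemma fsbig_pos_dists (F : R -> nat) :
    (forall b, 0 < b -> b \notin pos_dists -> F b = 0%N) ->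
  (\sum_(b \in [set b : R | 0 < b]%classic) F b)%R = (\sum_(b <- pos_dists) F b)%N.
Proof.
move=> F_eq0; rewrite (fsbigE pos_dists) ?pos_dists_uniq //.
- rewrite big_seq_cond [RHS]big_seq_cond; apply: eq_bigl => b.
  by case: (boolP (b \in _)) => //= /pos_dists_gt0 b_gt0; apply/mem_set.
- by move=> x /= /pos_dists_gt0.
Qed.

Section KernelJumps.
Variable h : 'M['F_2]_n -> nat.
Hypothesis h_mono : {homo h : X Y / (X <= Y)%MS >-> (X <= Y)%N}.

Definition ker_jump b := (h (kerP d b) - h (kerM d b))%N.

Lemma ker_jumpE b : 0 < b -> ker_jump b = (h (kerP d b) - h (kerP d (prev_dist b)))%N.
Proof. by move=> b_gt0; congr (_ - _)%N; apply/eqP; rewrite eqn_leq !h_mono ?(kerM_eqmx b_gt0). Qed.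

Lemma ker_jump_eq0 b : 0 < b -> b \notin pos_dists -> ker_jump b = 0%N.
Proof.
move=> b_gt0; rewrite mem_pos_dists b_gt0 andbT => b_notin.
by rewrite ker_jumpE //; apply/eqP; rewrite subn_eq0 h_mono ?kerP_sub_prev_dist.
Qed.

Lemma sum_ker_jump : (\sum_(b <- pos_dists) ker_jump b)%N = (h (kerP d diam) - h 0)%N.
Proof.
rewrite -kerP0 (eq_big_seq (fun b => h (kerP d b) - h (kerP d (prev_dist b))))%N.
  apply: telescope_pred_sum pos_dists_uniq pos_dists_gt0 _ diam_mem _.
  - by move=> r s le_rs; apply/h_mono/kerP_le.
  - move=> b /pos_dists_gt0 b_gt0; split; [exact: prev_dist_mem | exact: prev_dist_lt |].
    by move=> x; rewrite mem_pos_dists => /andP[x_in _]; apply: le_prev_dist.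
  - by move=> x; rewrite mem_pos_dists => /andP[x_in _]; apply: le_diam.
by move=> b /pos_dists_gt0; apply: ker_jumpE.
Qed.

End KernelJumps.

Lemma mult_eq0 b : 0 < b -> b \notin pos_dists -> mult d b = 0%N.
Proof. by apply: (ker_jump_eq0 (h := fun X => \rank X)) => X Y; apply: mxrankS. Qed.

End VietorisRipsKernels.

Lemma is_metric_sym (R : realType) n (d : 'I_n -> 'I_n -> R) :
  is_metric d -> forall x y, d x y = d y x.
Proof. by case. Qed.

Lemma is_metric_sep (R : realType) n (d : 'I_n -> 'I_n -> R) :
  is_metric d -> forall x y, d x y <= 0 -> x = y.
Proof. by case=> d_ge0 d_eq0 _ _ x y d_le0; apply/d_eq0/le_anti; rewrite d_le0 d_ge0. Qed.

Lemma mulmx_const1 (F : pzSemiRingType) p k q (A : 'M[F]_(p, k)) :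
  A *m (const_mx 1 : 'M_(k, q)) = \matrix_(i, j) \sum_l A i l.
Proof. by apply/matrixP => i j; rewrite !mxE; apply: eq_bigr => l _; rewrite mxE mulr1. Qed.

Section InducedMap.
Variables (n m : nat) (f : 'I_n -> 'I_m).

Lemma f0_const1 : f0 f *m const_mx 1 = const_mx 1 :> 'M['F_2]_(n, m).
Proof.
rewrite mulmx_const1; apply/matrixP => i j; rewrite !mxE (bigD1 (f i)) //= big1 ?addr0.
  by rewrite mxE eqxx.
by move=> k /negbTE k_ne; rewrite mxE eq_sym k_ne.
Qed.

Lemma mul_f0_sub_kermx_const1 p (A : 'M['F_2]_(p, n)) :
  (A <= kermx (const_mx 1 : 'M_n))%MS -> (A *m f0 f <= kermx (const_mx 1 : 'M_m))%MS.
Proof.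
move/sub_kermxP; rewrite mulmx_const1 => /matrixP A_sum0.
apply/sub_kermxP; rewrite -mulmxA f0_const1 mulmx_const1; apply/matrixP => i j.
have [n0|n_gt0] := posnP n; last by have := A_sum0 i (Ordinal n_gt0); rewrite !mxE.
by rewrite !mxE big1 // => l; have := ltn_ord l; rewrite {2}n0.
Qed.

Hypothesis f_inj : injective f.

Lemma row_free_f0 : row_free (f0 f).
Proof.
apply/row_freeP; exists (f0 f)^T; apply/matrixP => i k; rewrite !mxE (bigD1 (f i)) //= big1 ?addr0.
  by rewrite !mxE eqxx mul1r (inj_eq f_inj) eq_sym.
by move=> j /negbTE j_ne; rewrite !mxE eq_sym j_ne mul0r.
Qed.

Lemma mxrank_mul_f0 p (A : 'M['F_2]_(p, n)) : \rank (A *m f0 f) = \rank A.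
Proof. exact/mxrankMfree/row_free_f0. Qed.

End InducedMap.

Section PersistenceMatching.
Variables (R : realType) (n m : nat).
Variables (dX : 'I_n -> 'I_n -> R) (dZ : 'I_m -> 'I_m -> R) (f : 'I_n -> 'I_m).
Hypotheses (dX_metric : is_metric dX) (dZ_metric : is_metric dZ) (f_inj : injective f).

Let dX_sym := is_metric_sym dX_metric.
Let dZ_sym := is_metric_sym dZ_metric.

Definition rank_capZ a (Y : 'M['F_2]_m) :=
  \rank (kerP dX a *m f0 f :&: Y + kerM dX a *m f0 f)%MS.
Definition rank_capX b (X : 'M['F_2]_n) :=
  \rank (X *m f0 f :&: kerP dZ b + kerM dZ b)%MS.

Lemma Mf_jumpZ a b : 0 < a -> 0 < b -> Mf dX dZ f a b = ker_jump dZ (rank_capZ a) b.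
Proof.
move=> a_gt0 b_gt0; apply: rank_cap_quotientEl; last exact: kerM_sub_kerP.
exact/submxMr/kerM_sub_kerP.
Qed.

Lemma Mf_jumpX a b : 0 < a -> 0 < b -> Mf dX dZ f a b = ker_jump dX (rank_capX b) a.
Proof.
move=> a_gt0 b_gt0; apply: rank_cap_quotientEr; last exact: kerM_sub_kerP.
exact/submxMr/kerM_sub_kerP.
Qed.

Lemma rank_capZ_mono a : {homo rank_capZ a : Y Y' / (Y <= Y')%MS >-> (Y <= Y')%N}.
Proof. by move=> Y Y' le_YY'; rewrite mxrankS // addsmxS // capmxS. Qed.

Lemma rank_capX_mono b : {homo rank_capX b : X X' / (X <= X')%MS >-> (X <= X')%N}.
Proof. by move=> X X' le_XX'; rewrite mxrankS // addsmxS // capmxS // submxMr. Qed.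

Lemma Mf_eq0Z a b : 0 < a -> 0 < b -> b \notin pos_dists dZ -> Mf dX dZ f a b = 0%N.
Proof.
by move=> a_gt0 b_gt0; rewrite Mf_jumpZ //; apply: (ker_jump_eq0 dZ_sym (rank_capZ_mono a)).
Qed.

Lemma Mf_eq0X a b : 0 < a -> 0 < b -> a \notin pos_dists dX -> Mf dX dZ f a b = 0%N.
Proof.
by move=> a_gt0 b_gt0; rewrite Mf_jumpX //; apply: (ker_jump_eq0 dX_sym (rank_capX_mono b)).
Qed.

Lemma sum_Mf_row a : 0 < a -> (\sum_(b <- pos_dists dZ) Mf dX dZ f a b)%N = mult dX a.
Proof.
move=> a_gt0; rewrite (eq_big_seq (ker_jump dZ (rank_capZ a))); last first.
  by move=> b /pos_dists_gt0; apply: Mf_jumpZ.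
rewrite (sum_ker_jump dZ_sym (is_metric_sep dZ_metric) (rank_capZ_mono a)).
set W := (kerP dX a *m f0 f)%MS; set W' := (kerM dX a *m f0 f)%MS.
have le_W'W : (W' <= W)%MS by apply/submxMr/kerM_sub_kerP.
have le_W_diam : (W <= kerP dZ (diam dZ))%MS.
  rewrite kerP_diam //; apply: mul_f0_sub_kermx_const1; rewrite -(kerP_diam dX).
  by apply: kerPS => // x y _; apply/le_diam/mem_dists.
rewrite /rank_capZ -/W -/W' capmx0 adds0mx.
have -> : \rank (W :&: kerP dZ (diam dZ) + W')%MS = \rank W.
  apply/eqmx_rank; rewrite addsmx_sub capmxSl le_W'W /=.
  by rewrite (submx_trans _ (addsmxSl _ _)) // sub_capmx submx_refl le_W_diam.
by rewrite !mxrank_mul_f0.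
Qed.

Lemma sum_Mf_col b : 0 < b -> (\sum_(a <- pos_dists dX) Mf dX dZ f a b <= mult dZ b)%N.
Proof.
move=> b_gt0; rewrite (eq_big_seq (ker_jump dX (rank_capX b))); last first.
  by move=> a /pos_dists_gt0 a_gt0; apply: Mf_jumpX.
rewrite (sum_ker_jump dX_sym (is_metric_sep dX_metric) (rank_capX_mono b)).
have le_K'K : (kerM dZ b <= kerP dZ b)%MS by apply: kerM_sub_kerP.
rewrite /rank_capX mul0mx cap0mx adds0mx /mult leq_sub2r // mxrankS //.
by rewrite addsmx_sub capmxSr le_K'K.
Qed.

End PersistenceMatching.

Section Barcodes.
Variables (R : realType) (n : nat) (d : 'I_n -> 'I_n -> R).
Hypothesis d_sym : forall x y, d x y = d y x.

Lemma bar_support_pos_dists a : a \in bar_support d -> 0 < a /\ a \in pos_dists d.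
Proof.
rewrite in_setE => -[a_gt0 mult_gt0]; split=> //.
by apply: contraTT mult_gt0 => /(mult_eq0 d_sym a_gt0) ->.
Qed.

Lemma in_Rep p : p \in Rep d = is_copy (pos_dists d) (mult d) p.
Proof.
apply/idP/idP => [|/andP[a_in /andP[l_gt0 l_le]]].
  by rewrite in_setE => -[/bar_support_pos_dists[_ a_in] l_range]; rewrite /is_copy a_in.
rewrite in_setE; split; last by rewrite l_gt0.
by rewrite in_setE; split; [exact: pos_dists_gt0 a_in | exact: leq_trans l_gt0 l_le].
Qed.

End Barcodes.

Local Open Scope classical_set_scope.
Local Open Scope ring_scope.

Theorem proposition4p5 (R : realType) (n m : nat)
    (dX : 'I_n -> 'I_n -> R) (dZ : 'I_m -> 'I_m -> R) (f : 'I_n -> 'I_m) :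
  is_metric dX -> is_metric dZ -> injective f ->
  [/\ (forall a, a \in bar_support dX ->
         (\sum_(b \in [set b : R | 0 < b]) Mf dX dZ f a b)%R = mult dX a),
      (forall b, b \in bar_support dZ ->
         ((\sum_(a \in [set a : R | 0 < a]) Mf dX dZ f a b)%R <= mult dZ b)%N) &
      exists sigma : R * nat -> R * nat,
        [/\ {in Rep dX &, injective sigma},
            (forall p, p \in Rep dX -> sigma p \in Rep dZ) &
            forall a b, a \in bar_support dX -> 0 < b ->
              count (fun l => (sigma (a, l)).1 == b) (iota 1 (mult dX a))
              = Mf dX dZ f a b]].
Proof.
move=> mX mZ f_inj; have [dX_sym dZ_sym] := (is_metric_sym mX, is_metric_sym mZ).
have row_sum a : a \in pos_dists dX ->
    (\sum_(b <- pos_dists dZ) Mf dX dZ f a b)%N = mult dX a.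
  by move/pos_dists_gt0; apply: sum_Mf_row.
have col_sum b : b \in pos_dists dZ ->
    (\sum_(a <- pos_dists dX) Mf dX dZ f a b <= mult dZ b)%N.
  by move/pos_dists_gt0; apply: sum_Mf_col.
split.
- move=> a /(bar_support_pos_dists dX_sym)[a_gt0 _].
  by rewrite (@fsbig_pos_dists _ _ dZ) ?sum_Mf_row // => b b_gt0; apply: Mf_eq0Z.
- move=> b /(bar_support_pos_dists dZ_sym)[b_gt0 _].
  by rewrite (@fsbig_pos_dists _ _ dX) ?sum_Mf_col // => a a_gt0; apply: Mf_eq0X.
exists (match_copy 0 (pos_dists dX) (pos_dists dZ) (Mf dX dZ f)); split.
- move=> p q; rewrite !(in_Rep dX_sym).
  exact: match_copy_inj (pos_dists_uniq dZ) row_sum p q.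
- move=> p; rewrite (in_Rep dX_sym) (in_Rep dZ_sym).
  exact: match_copy_range (pos_dists_uniq dZ) row_sum col_sum p.
- move=> a b /(bar_support_pos_dists dX_sym)[a_gt0 a_in] b_gt0.
  rewrite (count_match_copy _ (pos_dists_uniq dZ) row_sum) //.
  by case: ifPn => // b_notin; rewrite Mf_eq0Z.
Qed.
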